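(* Let $q\ge3$ be an integer, $c\in\mathbb{R}$ and $\lambda\in(-1/q-c,-c)$ such that $f_c$ satisfies the pre-$q$-Sturmian condition for $\lambda$. Let $\theta=\lambda+1/q+c$. Then $\frac{3}{8q}<\theta<\frac{5}{8q}$.
   Context: $\mathbb{T}=\mathbb{R}/\mathbb{Z}$, $T(x)=qx\bmod1$. $f_c(x)=\log\left|\frac{\sin\pi q(x+c)}{\sin\pi(x+c)}\right|$. $C_\lambda=[\lambda,\lambda+1/q]\bmod1$. The function $f_c$ satisfies the pre-$q$-Sturmian condition for $\lambda$ if $f_c$ is Lipschitz on $C_\lambda$ and there exist a Lipschitz $\psi:\mathbb{T}\to\mathbb{R}$ and $\beta\in\mathbb{R}$ with $f_c(x)+\psi(x)-\psi(Tx)=\beta$ for all $x\in C_\lambda$. *)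

From Stdlib Require Import Reals.
Open Scope R_scope.

(* The circle T = R/Z is modelled by 1-periodic functions on R.
   The map T(x) = q x mod 1, computed on representatives. *)
Definition Tq (q : nat) (x : R) : R := frac_part (INR q * x).

(* f_c(x) = log | sin(pi q (x+c)) / sin(pi (x+c)) |, with the removable
   singularity at x + c in Z filled by its continuous value log q. *)
Definition f_c (q : nat) (c x : R) : R :=
  let y := x + c in
  if Req_EM_T (sin (PI * y)) 0 then ln (INR q)
  else ln (Rabs (sin (PI * INR q * y) / sin (PI * y))).

Definition in_C (q : nat) (lam x : R) : Prop :=
  exists k : Z, lam <= x + IZR k <= lam + 1 / INR q.

Definition one_periodic (g : R -> R) : Prop := forall x, g (x + 1) = g x.

(* Lipschitz on T (equivalent, for 1-periodic g, to Lipschitz on R). *)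
Definition lipschitz (g : R -> R) : Prop :=
  exists L : R, forall x y, Rabs (g x - g y) <= L * Rabs (x - y).

Definition lipschitz_on (A : R -> Prop) (g : R -> R) : Prop :=
  exists L : R, forall x y, A x -> A y -> Rabs (g x - g y) <= L * Rabs (x - y).

Definition pre_sturmian (q : nat) (c lam : R) : Prop :=
  lipschitz_on (in_C q lam) (f_c q c) /\
  exists (psi : R -> R) (beta : R),
    one_periodic psi /\ lipschitz psi /\
    forall x, in_C q lam x -> f_c q c x + psi x - psi (Tq q x) = beta.

(* On [C_lam] the point [y = x + c] ranges over
   [[theta - 1/q, theta]] and [f_c x = P |y|], where [P t = ln (sin (PI q t) / sin (PI t))]
   decreases on [[0, 1/q)].  Suppose [theta <= 3/(8q)].  Then [f_c] can only decrease where
   [0 < y <= theta], so it is one-sided [K]-Lipschitz on [C_lam].  Pulling the cohomological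
   equation back along the inverse branches of [T] turns a one-sided bound [B] for [psi] into
   [(K + B)/q], so [psi] is one-sided [K/(q-1)]-Lipschitz on [C_lam].  As [T] identifies the
   ends of [C_lam], [f_c (lam + 1/q) - f_c lam = psi lam - psi (lam + 1/q)], and expanding the
   right side once more yields [2 P theta - P (1/q - theta) - ln q <= K / (q^2 (q-1))], which
   explicit trigonometric estimates refute.  The upper bound follows from the symmetry
   [x |-> -x], [c |-> -c], which turns [theta] into [1/q - theta]. *)

From Stdlib Require Import Reals Lra Lia ZArith.
Open Scope R_scope.

Lemma ln_le x y : 0 < x -> x <= y -> ln x <= ln y.
Proof.
  intros Hx [Hxy | ->]; [left; apply ln_increasing |]; lra.
Qed.

Lemma ln_div x y : 0 < x -> 0 < y -> ln (x / y) = ln x - ln y.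
Proof.
  intros Hx Hy. unfold Rdiv.
  rewrite ln_mult, ln_Rinv by (try apply Rinv_0_lt_compat; lra). ring.
Qed.

Lemma ln_sub_le x y : 0 < x -> 0 < y -> ln x - ln y <= (x - y) / y.
Proof.
  intros Hx Hy. pose proof (exp_ineq1_le (ln (x / y))) as H.
  rewrite exp_ln, ln_div in H by (try apply Rdiv_lt_0_compat; lra).
  replace ((x - y) / y) with (x / y - 1) by (field; lra). lra.
Qed.

Lemma exp_le_inv_1_minus x : x < 1 -> exp x <= 1 / (1 - x).
Proof.
  intros Hx.
  assert (Hprod : exp x * exp (- x) = 1) by (rewrite <- exp_plus, Rplus_opp_r; apply exp_0).
  pose proof (exp_ineq1_le (- x)). pose proof (exp_pos x).
  apply Rmult_le_reg_r with (1 - x); [lra |].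
  unfold Rdiv; rewrite Rmult_assoc, Rinv_l, Rmult_1_r by lra.
  nra.
Qed.

Lemma Rabs_sin_le z : 0 <= z -> Rabs (sin z) <= z.
Proof.
  intros Hz. destruct (Rle_dec z 1) as [Hz1 | Hz1].
  - destruct (Req_dec z 0) as [-> | Hz0]; [rewrite sin_0, Rabs_R0; lra |].
    assert (0 < sin z) by (apply sin_gt_0; pose proof PI2_1; lra).
    rewrite Rabs_pos_eq by lra. left; apply sin_lt_x; lra.
  - pose proof (SIN_bound z). apply Rabs_le; lra.
Qed.

Lemma cos_sub_le a b : 0 <= a -> a <= b -> cos a - cos b <= (b * b - a * a) / 2.
Proof.
  intros Ha Hab. rewrite form2.
  replace ((a - b) / 2) with (- ((b - a) / 2)) by field. rewrite sin_neg.
  pose proof (Rabs_sin_le ((b - a) / 2) ltac:(lra)).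
  pose proof (Rabs_sin_le ((a + b) / 2) ltac:(lra)).
  pose proof (Rle_abs (sin ((b - a) / 2) * sin ((a + b) / 2))).
  assert (Rabs (sin ((b - a) / 2)) * Rabs (sin ((a + b) / 2)) <= (b - a) / 2 * ((a + b) / 2))
    by (apply Rmult_le_compat; auto using Rabs_pos).
  rewrite Rabs_mult in *. nra.
Qed.

Lemma sin_ge_cubic a : 0 <= a -> a <= PI -> a - a * a * a / 6 <= sin a.
Proof.
  intros H0 HPI. destruct (sin_bound a 0 H0 HPI) as [H _].
  unfold sin_approx, sin_term in H; simpl in H. lra.
Qed.

Lemma sin_le_quintic a : 0 <= a -> a <= PI ->
  sin a <= a - a * a * a / 6 + a * a * a * a * a / 120.
Proof.
  intros H0 HPI. destruct (sin_bound a 0 H0 HPI) as [_ H].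
  unfold sin_approx, sin_term in H; simpl in H. lra.
Qed.

Lemma PI_bounds : 3.1415 <= PI <= 3.1416.
Proof.
  destruct (PI_2_3_7_ineq 2) as [Hlo Hhi].
  unfold sum_f_R0, tg_alt, PI_2_3_7_tg, Ratan_seq in Hlo, Hhi; simpl in Hlo, Hhi.
  lra.
Qed.

Lemma sin_3PI8_lb : 0.92387 <= sin (3 * PI / 8).
Proof.
  assert (Hcos : cos (2 * (3 * PI / 8)) = 1 - 2 * sin (3 * PI / 8) * sin (3 * PI / 8))
    by apply cos_2a_sin.
  replace (2 * (3 * PI / 8)) with (PI - PI / 4) in Hcos by field.
  rewrite Rtrigo_facts.cos_pi_minus, cos_PI4 in Hcos.
  assert (Hsqrt2 : sqrt 2 <= 1.41422).
  { rewrite <- (sqrt_square 1.41422) by lra. apply sqrt_le_1_alt. lra. }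
  pose proof Rlt_sqrt2_0.
  assert (1 / 1.41422 <= 1 / sqrt 2)
    by (apply Rmult_le_compat_l; [lra | apply Rinv_le_contravar; lra]).
  assert (0 < sin (3 * PI / 8)) by (apply sin_gt_0; pose proof PI_RGT_0; lra).
  nra.
Qed.

Lemma ln_127_gt : 0.234 < ln 1.27.
Proof.
  rewrite <- (ln_exp 0.234). apply ln_increasing; [apply exp_pos |].
  set (y := 0.234 / 8).
  assert (Hpow : exp 0.234 = exp y ^ 8).
  { replace 0.234 with (y + y + y + y + y + y + y + y) by (unfold y; lra).
    rewrite !exp_plus. ring. }
  assert (Hy : exp y <= 1.030132).
  { eapply Rle_trans; [apply exp_le_inv_1_minus; unfold y; lra |].
    unfold y. apply Rmult_le_reg_r with (1 - 0.234 / 8); [lra |].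
    unfold Rdiv; rewrite Rmult_assoc, Rinv_l, Rmult_1_r by lra. lra. }
  rewrite Hpow.
  apply Rle_lt_trans with (1.030132 ^ 8); [apply pow_incr; pose proof (exp_pos y); lra |].
  simpl. lra.
Qed.

(** * The ratio sin (n t) / sin t *)

Lemma nat_ind2 (P : nat -> Prop) :
  P O -> P 1%nat -> (forall n, P n -> P (S (S n))) -> forall n, P n.
Proof.
  intros H0 H1 HS n. enough (P n /\ P (S n)) by tauto.
  induction n as [| n [IH IHS]]; split; auto.
Qed.

(* [sin (n t) / sin t] as a sum of cosines (the Chebyshev polynomial
   [U_(n-1)] at [cos t]), hence defined and equal to [n] at [t = 0]. *)
Fixpoint sin_ratio (n : nat) (t : R) : R :=
  match n with
  | O => 0
  | S O => 1
  | S (S m as k) => sin_ratio m t + 2 * cos (INR k * t)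
  end.

Lemma sin_ratio_SS n t : sin_ratio (S (S n)) t = sin_ratio n t + 2 * cos (INR (S n) * t).
Proof. destruct n; reflexivity. Qed.

Lemma sin_ratio_spec n t : sin t * sin_ratio n t = sin (INR n * t).
Proof.
  induction n as [| | n IH] using nat_ind2.
  - simpl. rewrite Rmult_0_l, sin_0. ring.
  - simpl. rewrite Rmult_1_l. ring.
  - rewrite sin_ratio_SS, Rmult_plus_distr_l, IH.
    replace (INR (S (S n)) * t) with (INR (S n) * t + t) by (rewrite !S_INR; ring).
    replace (INR n * t) with (INR (S n) * t - t) by (rewrite S_INR; ring).
    rewrite sin_plus, sin_minus. ring.
Qed.

Lemma sin_ratio_0 n : sin_ratio n 0 = INR n.
Proof.
  induction n as [| | n IH] using nat_ind2; try reflexivity.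
  rewrite sin_ratio_SS, IH, Rmult_0_r, cos_0, !S_INR. ring.
Qed.

Lemma sin_ratio_opp n t : sin_ratio n (- t) = sin_ratio n t.
Proof.
  induction n as [| | n IH] using nat_ind2; try reflexivity.
  rewrite !sin_ratio_SS, IH, Ropp_mult_distr_r_reverse, cos_neg. reflexivity.
Qed.

Lemma sin_ratio_antitone n t1 t2 :
  0 <= t1 -> t1 <= t2 -> INR n * t2 <= PI -> sin_ratio n t2 <= sin_ratio n t1.
Proof.
  intros H1 H12. induction n as [| | n IH] using nat_ind2; intros Hn; try (simpl; lra).
  rewrite !sin_ratio_SS.
  pose proof (pos_INR n).
  rewrite !S_INR in *.
  assert (cos ((INR n + 1) * t2) <= cos ((INR n + 1) * t1)) by (apply cos_decr_1; nra).
  assert (sin_ratio n t2 <= sin_ratio n t1) by (apply IH; nra).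
  lra.
Qed.

Lemma sin_ratio_pos n t : (1 <= n)%nat -> 0 <= t -> INR n * t < PI -> 0 < sin_ratio n t.
Proof.
  intros Hn Ht HPI.
  assert (Hn' : 1 <= INR n) by (apply (le_INR 1); lia).
  destruct (Req_dec t 0) as [-> | Ht0]; [rewrite sin_ratio_0; lra |].
  assert (0 < sin t) by (apply sin_gt_0; nra).
  assert (0 < sin (INR n * t)) by (apply sin_gt_0; nra).
  pose proof (sin_ratio_spec n t). nra.
Qed.

Lemma sin_ratio_sub_le n A B : 0 <= A -> A <= B ->
  sin_ratio n A - sin_ratio n B <= INR n * (INR n * INR n - 1) / 6 * (B * B - A * A).
Proof.
  intros HA HAB. induction n as [| | n IH] using nat_ind2; try (simpl; nra).
  rewrite !sin_ratio_SS.
  pose proof (pos_INR n).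
  pose proof (cos_sub_le (INR (S n) * A) (INR (S n) * B)) as Hcos.
  rewrite !S_INR in *.
  assert (cos ((INR n + 1) * A) - cos ((INR n + 1) * B)
          <= ((INR n + 1) * B * ((INR n + 1) * B) - (INR n + 1) * A * ((INR n + 1) * A)) / 2)
    by (apply Hcos; nra).
  nra.
Qed.

Definition profile (q : nat) (t : R) : R := ln (sin_ratio q (PI * t)).

(* [sin_ratio_sub_le] on [[0, PI t0]], divided by the minimum [sin_ratio q (PI t0)] of
   [sin_ratio q] there. *)
Definition profile_lip (q : nat) (t0 : R) : R :=
  INR q * (INR q * INR q - 1) / 6 * (PI * PI) * (2 * t0) / sin_ratio q (PI * t0).

Section Profile.
Variable q : nat.
Hypothesis q_ge_1 : (1 <= q)%nat.

Let Q_ge_1 : 1 <= INR q.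
Proof. apply (le_INR 1); lia. Qed.

Let Q_mul_lt_1 t : t < 1 / INR q -> INR q * t < 1.
Proof.
  intros Ht. apply Rmult_lt_reg_r with (/ INR q); [apply Rinv_0_lt_compat; lra |].
  replace (INR q * t * / INR q) with t by (field; lra). lra.
Qed.

Lemma sin_ratio_pos_below t : 0 <= t -> t < 1 / INR q -> 0 < sin_ratio q (PI * t).
Proof.
  intros H0 H1. pose proof PI_RGT_0. pose proof (Q_mul_lt_1 t H1).
  apply sin_ratio_pos; [lia | nra | nra].
Qed.

Lemma sin_ratio_antitone_below t1 t2 : 0 <= t1 -> t1 <= t2 -> t2 < 1 / INR q ->
  sin_ratio q (PI * t2) <= sin_ratio q (PI * t1).
Proof.
  intros H1 H12 H2. pose proof PI_RGT_0. pose proof (Q_mul_lt_1 t2 H2).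
  apply sin_ratio_antitone; nra.
Qed.

Lemma profile_0 : profile q 0 = ln (INR q).
Proof. unfold profile. rewrite Rmult_0_r, sin_ratio_0. reflexivity. Qed.

Lemma profile_antitone t1 t2 : 0 <= t1 -> t1 <= t2 -> t2 < 1 / INR q ->
  profile q t2 <= profile q t1.
Proof.
  intros H1 H12 H2. unfold profile.
  apply ln_le; [apply sin_ratio_pos_below | apply sin_ratio_antitone_below]; lra.
Qed.

Lemma profile_lip_nonneg t0 : 0 <= t0 -> t0 < 1 / INR q -> 0 <= profile_lip q t0.
Proof.
  intros H0 H1. pose proof (sin_ratio_pos_below t0 H0 H1). pose proof PI_RGT_0.
  unfold profile_lip. apply Rmult_le_pos; [| left; apply Rinv_0_lt_compat; lra].
  apply Rmult_le_pos; [| lra]. apply Rmult_le_pos; [| nra].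
  apply Rmult_le_pos; [| lra]. apply Rmult_le_pos; nra.
Qed.

Lemma profile_sub_le t0 A B : 0 <= A -> A <= B -> B <= t0 -> t0 < 1 / INR q ->
  profile q A - profile q B <= profile_lip q t0 * (B - A).
Proof.
  intros HA HAB HB Ht0. pose proof PI_RGT_0.
  pose proof (sin_ratio_pos_below A HA ltac:(lra)) as PA.
  pose proof (sin_ratio_pos_below B ltac:(lra) ltac:(lra)) as PB.
  pose proof (sin_ratio_pos_below t0 ltac:(lra) Ht0) as P0.
  assert (Hmono : sin_ratio q (PI * t0) <= sin_ratio q (PI * B))
    by (apply sin_ratio_antitone_below; lra).
  set (c3 := INR q * (INR q * INR q - 1) / 6).
  assert (Hc3 : 0 <= c3) by (unfold c3; apply Rmult_le_pos; nra).
  assert (Hdrop : sin_ratio q (PI * A) - sin_ratio q (PI * B) <= c3 * (PI * PI) * (2 * t0) * (B - A)).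
  { eapply Rle_trans; [apply sin_ratio_sub_le; nra |].
    replace (PI * B * (PI * B) - PI * A * (PI * A)) with (PI * PI * ((B - A) * (B + A))) by ring.
    replace (c3 * (PI * PI) * (2 * t0) * (B - A)) with (c3 * (PI * PI * ((B - A) * (2 * t0))))
      by ring.
    apply Rmult_le_compat_l; [exact Hc3 |].
    apply Rmult_le_compat_l; nra. }
  unfold profile. eapply Rle_trans; [apply ln_sub_le; assumption |].
  unfold profile_lip. fold c3.
  apply Rle_trans with ((c3 * (PI * PI) * (2 * t0) * (B - A)) / sin_ratio q (PI * B)).
  { apply Rmult_le_compat_r; [left; apply Rinv_0_lt_compat |]; lra. }
  replace (c3 * (PI * PI) * (2 * t0) / sin_ratio q (PI * t0) * (B - A))
    with ((c3 * (PI * PI) * (2 * t0) * (B - A)) / sin_ratio q (PI * t0)) by (field; lra).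
  apply Rmult_le_compat_l; [| apply Rinv_le_contravar; lra].
  apply Rmult_le_pos; [| lra]. apply Rmult_le_pos; nra.
Qed.

Lemma f_c_profile c x : Rabs (x + c) < 1 / INR q -> f_c q c x = profile q (Rabs (x + c)).
Proof.
  intros Hy. unfold f_c. set (y := x + c) in *.
  assert (1 / INR q <= 1)
    by (apply Rmult_le_reg_r with (INR q); [lra |]; field_simplify; lra).
  destruct (Req_EM_T (sin (PI * y)) 0) as [Hsin | Hsin].
  - destruct (sin_eq_0_0 _ Hsin) as [k Hk]. pose proof PI_RGT_0.
    assert (Hyk : y = IZR k) by (apply Rmult_eq_reg_l with PI; lra).
    apply Rabs_def2 in Hy. rewrite Hyk in Hy.
    assert (Hk1 : IZR k < IZR 1) by lra. assert (Hk2 : IZR (-1) < IZR k) by lra.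
    apply lt_IZR in Hk1, Hk2. assert (k = 0%Z) by lia.
    subst k. rewrite Hyk, Rabs_R0, profile_0. reflexivity.
  - unfold profile. f_equal.
    replace (PI * INR q * y) with (INR q * (PI * y)) by ring.
    rewrite <- sin_ratio_spec.
    replace (sin (PI * y) * sin_ratio q (PI * y) / sin (PI * y)) with (sin_ratio q (PI * y))
      by (field; exact Hsin).
    assert (Heven : sin_ratio q (PI * y) = sin_ratio q (PI * Rabs y)).
    { unfold Rabs. destruct (Rcase_abs y); [| reflexivity].
      rewrite <- sin_ratio_opp. f_equal. ring. }
    rewrite Heven. apply Rabs_pos_eq. left.
    apply sin_ratio_pos_below; [apply Rabs_pos | exact Hy].
Qed.
End Profile.

(* The two sides of [profile_gap] with [x = PI / (8 Q)]; they are separated by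
   [0.234 < ln 1.27], with little slack at [Q = 3]. *)
Lemma numeric_lip_term_le Q : 3 <= Q ->
  (Q + 1) * PI ^ 2 * sin (3 * (PI / (8 * Q))) <= 0.234 * (8 * Q ^ 2 * sin (3 * PI / 8)).
Proof.
  intros HQ. pose proof PI_bounds. pose proof sin_3PI8_lb.
  assert (Hx : 0 < 3 * (PI / (8 * Q))) by (apply Rmult_lt_0_compat; [lra | apply Rdiv_lt_0_compat; lra]).
  assert (Hsin : sin (3 * (PI / (8 * Q))) <= 3 * (PI / (8 * Q))) by (left; apply sin_lt_x; lra).
  apply Rle_trans with ((Q + 1) * PI ^ 2 * (3 * (PI / (8 * Q)))).
  { apply Rmult_le_compat_l; [nra | exact Hsin]. }
  replace ((Q + 1) * PI ^ 2 * (3 * (PI / (8 * Q)))) with (3 * (Q + 1) * PI ^ 3 / (8 * Q))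
    by (field; lra).
  apply Rmult_le_reg_r with (8 * Q); [lra |].
  unfold Rdiv; rewrite Rmult_assoc, Rinv_l, Rmult_1_r by lra.
  assert (HPI3 : PI ^ 3 <= 31.007) by (simpl; nra).
  assert (HQ3 : 27 <= Q * Q * Q) by nra.
  assert (3 * (Q + 1) <= 4 / 9 * (Q * Q * Q)) by nra.
  simpl. nra.
Qed.

Lemma numeric_ratio_term_ge Q : 3 <= Q ->
  1.27 * (Q * sin (3 * (PI / (8 * Q))) ^ 2) <= sin (3 * PI / 8) * sin (5 * (PI / (8 * Q))).
Proof.
  intros HQ. pose proof PI_bounds. pose proof sin_3PI8_lb.
  set (x := PI / (8 * Q)).
  assert (Hx0 : 0 < x) by (unfold x; apply Rdiv_lt_0_compat; lra).
  assert (HQx : Q * x = PI / 8) by (unfold x; field; lra).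
  assert (Hx1 : x <= 3.1416 / 24) by nra.
  pose proof (sin_ge_cubic (5 * x) ltac:(lra) ltac:(lra)) as S5.
  pose proof (sin_le_quintic (3 * x) ltac:(lra) ltac:(lra)) as S3.
  assert (0 < sin (3 * x)) by (apply sin_gt_0; lra).
  set (u := x * x).
  assert (Hu : 0 <= u <= 0.0171349) by (unfold u; split; nra).
  set (p := 3 - 9 / 2 * u + 81 / 40 * u * u).
  assert (Hp0 : 0 < p) by (unfold p; nra).
  assert (Hsin3 : sin (3 * x) ^ 2 <= x * x * (p * p)).
  { assert (sin (3 * x) <= x * p) by (unfold p, u; nra). simpl. nra. }
  assert (Hpoly : 1.27 * (3.1416 / 8) * (p * p) <= 0.92387 * (5 - 125 * u / 6)).
  { unfold p. assert (u * u <= 0.0171349 * u) by nra.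
    assert (u * u * u <= 0.0171349 * u * u) by nra.
    assert (0 <= u * u * u * u) by nra. nra. }
  assert (Hsin5 : x * (5 - 125 * u / 6) <= sin (5 * x)) by (unfold u; lra).
  assert (HQsin3 : Q * sin (3 * x) ^ 2 <= PI / 8 * x * (p * p)).
  { rewrite <- HQx. replace (Q * x * x * (p * p)) with (Q * (x * x * (p * p))) by ring.
    apply Rmult_le_compat_l; lra. }
  assert (HPIp : PI / 8 * x * (p * p) <= 3.1416 / 8 * x * (p * p)).
  { apply Rmult_le_compat_r; [nra |]. apply Rmult_le_compat_r; lra. }
  assert (Hs5 : 0.92387 * (x * (5 - 125 * u / 6)) <= sin (3 * PI / 8) * (x * (5 - 125 * u / 6)))
    by (apply Rmult_le_compat_r; [apply Rmult_le_pos |]; lra).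
  assert (sin (3 * PI / 8) * (x * (5 - 125 * u / 6)) <= sin (3 * PI / 8) * sin (5 * x))
    by (apply Rmult_le_compat_l; lra).
  nra.
Qed.

Lemma sin_ratio_PI_div q k : (1 <= q)%nat -> 0 < k < 8 ->
  sin_ratio q (PI * (k / (8 * INR q))) = sin (k * PI / 8) / sin (PI * (k / (8 * INR q))).
Proof.
  intros Hq Hk. assert (HQ : 1 <= INR q) by (apply (le_INR 1); lia).
  pose proof PI_RGT_0.
  assert (Hsin : 0 < sin (PI * (k / (8 * INR q)))).
  { apply sin_gt_0; [apply Rmult_lt_0_compat; [| apply Rdiv_lt_0_compat]; lra |].
    apply Rmult_lt_reg_r with (8 * INR q); [lra |]. field_simplify; nra. }
  apply Rmult_eq_reg_l with (sin (PI * (k / (8 * INR q)))); [| lra].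
  rewrite sin_ratio_spec. field_simplify; [| lra]. f_equal. field. lra.
Qed.

Lemma profile_gap q : (3 <= q)%nat ->
  profile_lip q (3 / (8 * INR q)) / (INR q * INR q * (INR q - 1))
  < 2 * profile q (3 / (8 * INR q)) - profile q (5 / (8 * INR q)) - ln (INR q).
Proof.
  intros Hq. assert (HQ : 3 <= INR q) by (apply (le_INR 3) in Hq; simpl in Hq; lra).
  pose proof PI_RGT_0. pose proof sin_3PI8_lb.
  unfold profile, profile_lip.
  rewrite !sin_ratio_PI_div by (lia || lra).
  replace (5 * PI / 8) with (PI - 3 * PI / 8) by field. rewrite sin_PI_x.
  replace (PI * (3 / (8 * INR q))) with (3 * (PI / (8 * INR q))) by (field; lra).
  replace (PI * (5 / (8 * INR q))) with (5 * (PI / (8 * INR q))) by (field; lra).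
  pose proof (numeric_lip_term_le _ HQ). pose proof (numeric_ratio_term_ge _ HQ).
  set (x := PI / (8 * INR q)) in *. set (s := sin (3 * PI / 8)) in *.
  assert (Hx : 0 < x) by (apply Rdiv_lt_0_compat; lra).
  assert (Hx5 : 5 * x < PI).
  { unfold x. apply Rmult_lt_reg_r with (8 * INR q); [lra |]. field_simplify; nra. }
  assert (S3 : 0 < sin (3 * x)) by (apply sin_gt_0; lra).
  assert (S5 : 0 < sin (5 * x)) by (apply sin_gt_0; lra).
  rewrite !ln_div by lra.
  replace (INR q * (INR q * INR q - 1) / 6 * (PI * PI) * (2 * (3 / (8 * INR q))) / (s / sin (3 * x))
             / (INR q * INR q * (INR q - 1)))
    with ((INR q + 1) * PI ^ 2 * sin (3 * x) / (8 * INR q ^ 2 * s)) by (field; lra).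
  assert (Hden : 0 < 8 * INR q ^ 2 * s)
    by (apply Rmult_lt_0_compat; [apply Rmult_lt_0_compat; [lra | apply pow_lt; lra] | lra]).
  assert ((INR q + 1) * PI ^ 2 * sin (3 * x) / (8 * INR q ^ 2 * s) <= 0.234).
  { apply Rmult_le_reg_r with (8 * INR q ^ 2 * s); [exact Hden |].
    unfold Rdiv; rewrite Rmult_assoc, Rinv_l, Rmult_1_r by lra. lra. }
  assert (Hratio : 1.27 <= s * sin (5 * x) / (INR q * sin (3 * x) ^ 2)).
  { apply Rmult_le_reg_r with (INR q * sin (3 * x) ^ 2); [nra |].
    unfold Rdiv; rewrite Rmult_assoc, Rinv_l, Rmult_1_r by nra. lra. }
  pose proof (ln_le 1.27 _ ltac:(lra) Hratio) as Hln.
  rewrite ln_div, !ln_mult, ln_pow in Hln by nra. change (INR 2) with (1 + 1) in Hln.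
  pose proof ln_127_gt. lra.
Qed.

(** * Pulling bounds back along the inverse branches of T *)

Lemma one_periodic_IZR (g : R -> R) : one_periodic g -> forall y (k : Z), g (y + IZR k) = g y.
Proof.
  intros Hg.
  assert (Hnat : forall n y, g (y + INR n) = g y).
  { induction n as [| n IH]; intros y; [simpl; rewrite Rplus_0_r; reflexivity |].
    rewrite S_INR, <- Rplus_assoc, Hg. apply IH. }
  intros y k. destruct (Z_le_gt_dec 0 k) as [Hk | Hk].
  - rewrite <- (Z2Nat.id k Hk), <- INR_IZR_INZ. apply Hnat.
  - replace k with (- Z.of_nat (Z.to_nat (- k)))%Z by lia.
    rewrite opp_IZR, <- INR_IZR_INZ, <- (Hnat (Z.to_nat (- k))).
    f_equal. ring.
Qed.

Lemma nonpos_of_le_geometric (Q C d : R) : 1 < Q -> (forall n, d <= C / Q ^ n) -> d <= 0.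
Proof.
  intros HQ Hd. apply Rnot_lt_le. intros Hd0.
  destruct (Pow_x_infinity Q ltac:(rewrite Rabs_pos_eq; lra) (C / d + 1)) as [N HN].
  specialize (HN N (Nat.le_refl N)). specialize (Hd N).
  assert (HQN : 0 < Q ^ N) by (apply pow_lt; lra).
  rewrite Rabs_pos_eq in HN by lra.
  assert (C < d * Q ^ N).
  { apply Rmult_lt_reg_r with (/ d); [apply Rinv_0_lt_compat; lra |].
    replace (d * Q ^ N * / d) with (Q ^ N) by (field; lra). unfold Rdiv in HN. lra. }
  assert (C / Q ^ N < d).
  { apply Rmult_lt_reg_r with (Q ^ N); [lra |].
    replace (C / Q ^ N * Q ^ N) with C by (field; lra). lra. }
  lra.
Qed.

Lemma unit_block_split (s u v : R) : u <= v -> v <= u + 1 ->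
  exists m : Z, s + IZR m <= u <= s + IZR m + 1 /\
    (v <= s + IZR m + 1 \/ s + IZR m + 1 <= v <= s + IZR (m + 1) + 1).
Proof.
  intros Huv Hlen. exists (Int_part (u - s)).
  destruct (base_Int_part (u - s)). rewrite plus_IZR.
  split; [lra |].
  destruct (Rle_dec v (s + IZR (Int_part (u - s)) + 1)); [left | right]; lra.
Qed.

Definition one_sided_lipschitz (a b K : R) (g : R -> R) : Prop :=
  forall u v, a <= u -> u <= v -> v <= b -> g u - g v <= K * (v - u).

Lemma one_sided_lipschitz_glue (g : R -> R) (s C : R) :
  (forall m : Z, one_sided_lipschitz (s + IZR m) (s + IZR m + 1) C g) ->
  forall u v, u <= v -> v <= u + 1 -> g u - g v <= C * (v - u).
Proof.
  intros Hblock u v Huv Hlen.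
  destruct (unit_block_split s u v Huv Hlen) as [m [Hu [Hv | Hv]]].
  - apply (Hblock m); lra.
  - remember (s + IZR m + 1) as p eqn:Hp_def.
    assert (Hp : p = s + IZR (m + 1)) by (rewrite plus_IZR; lra).
    pose proof (Hblock m u p ltac:(lra) ltac:(lra) ltac:(lra)).
    pose proof (Hblock (m + 1)%Z p v ltac:(lra) ltac:(lra) ltac:(lra)).
    replace (C * (v - u)) with (C * (p - u) + C * (v - p)) by ring.
    lra.
Qed.

Section Transfer.
Variables (Q a K beta : R) (F psi : R -> R).
Hypothesis Q_gt_1 : 1 < Q.
Hypothesis psi_periodic : one_periodic psi.
Hypothesis psi_lipschitz : lipschitz psi.
Hypothesis cohomology : forall x, a <= x <= a + 1 / Q -> F x + psi x - psi (Q * x) = beta.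
Hypothesis F_one_sided : one_sided_lipschitz a (a + 1 / Q) K F.

(* The point of [[a, a + 1/Q]] that [x |-> Q x mod 1] sends to [y], for [y] in the block
   [[Q a + m, Q a + m + 1]]. *)
Let branch (m : Z) (y : R) : R := (y - IZR m) / Q.

Let branch_sub m u v : branch m v - branch m u = (v - u) / Q.
Proof. unfold branch. field. lra. Qed.

Let branch_le m u v : u <= v -> branch m u <= branch m v.
Proof.
  intros Huv. unfold branch, Rdiv.
  apply Rmult_le_compat_r; [left; apply Rinv_0_lt_compat |]; lra.
Qed.

Let branch_spec m y : Q * a + IZR m <= y <= Q * a + IZR m + 1 ->
  a <= branch m y <= a + 1 / Q /\ psi y = F (branch m y) + psi (branch m y) - beta.
Proof.
  intros Hy.
  assert (Hb : a <= branch m y <= a + 1 / Q).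
  { unfold branch. split;
      apply Rmult_le_reg_r with Q; try lra; field_simplify; lra. }
  split; [exact Hb |].
  pose proof (cohomology _ Hb) as E.
  replace (Q * branch m y) with (y + IZR (- m)) in E
    by (unfold branch; rewrite opp_IZR; field; lra).
  rewrite (one_periodic_IZR psi psi_periodic) in E. lra.
Qed.

Let block_estimate B m u v : one_sided_lipschitz a (a + 1 / Q) B psi ->
  Q * a + IZR m <= u -> u <= v -> v <= Q * a + IZR m + 1 ->
  psi u - psi v <= F (branch m u) - F (branch m v) + B * ((v - u) / Q).
Proof.
  intros HB Hu Huv Hv.
  destruct (branch_spec m u ltac:(lra)) as [Bu ->].
  destruct (branch_spec m v ltac:(lra)) as [Bv ->].
  pose proof (HB _ _ (proj1 Bu) (branch_le m u v Huv) (proj2 Bv)).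
  rewrite branch_sub in *. lra.
Qed.

Let Q_inv_le_1 : 1 / Q <= 1.
Proof. apply Rmult_le_reg_r with Q; [lra |]. field_simplify; lra. Qed.

Lemma psi_one_sided_step B : one_sided_lipschitz a (a + 1 / Q) B psi ->
  one_sided_lipschitz a (a + 1 / Q) ((K + B) / Q) psi.
Proof.
  intros HB u v Hu Huv Hv.
  apply (one_sided_lipschitz_glue psi (Q * a)); [| lra | lra].
  intros m u' v' Hu' Huv' Hv'.
  eapply Rle_trans; [apply (block_estimate B m); eassumption |].
  destruct (branch_spec m u' ltac:(lra)) as [Bu _].
  destruct (branch_spec m v' ltac:(lra)) as [Bv _].
  pose proof (F_one_sided _ _ (proj1 Bu) (branch_le m u' v' Huv') (proj2 Bv)).
  rewrite branch_sub in *.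
  replace ((K + B) / Q * (v' - u')) with (K * ((v' - u') / Q) + B * ((v' - u') / Q))
    by (field; lra).
  lra.
Qed.

(* [B |-> (K + B) / Q] contracts by [1/Q] towards its fixed point [K / (Q - 1)]. *)
Lemma psi_one_sided_geometric :
  exists C, forall n, one_sided_lipschitz a (a + 1 / Q) (K / (Q - 1) + C / Q ^ n) psi.
Proof.
  destruct psi_lipschitz as [L HL].
  exists (L - K / (Q - 1)). induction n as [| n IH].
  - intros u v _ Huv _. specialize (HL u v).
    rewrite (Rabs_minus_sym u v), (Rabs_pos_eq (v - u)) in HL by lra.
    pose proof (Rle_abs (psi u - psi v)).
    replace (K / (Q - 1) + (L - K / (Q - 1)) / Q ^ 0) with L by (simpl; field; lra).
    lra.
  - assert (0 < Q ^ n) by (apply pow_lt; lra).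
    replace (K / (Q - 1) + (L - K / (Q - 1)) / Q ^ S n)
      with ((K + (K / (Q - 1) + (L - K / (Q - 1)) / Q ^ n)) / Q)
      by (simpl; field; repeat split; lra).
    apply psi_one_sided_step, IH.
Qed.

Lemma psi_one_sided : one_sided_lipschitz a (a + 1 / Q) (K / (Q - 1)) psi.
Proof.
  intros u v Hu Huv Hv. destruct psi_one_sided_geometric as [C HC].
  cut (psi u - psi v - K / (Q - 1) * (v - u) <= 0); [lra |].
  apply (nonpos_of_le_geometric Q (C * (v - u))); [exact Q_gt_1 |].
  intros n. specialize (HC n u v Hu Huv Hv).
  assert (0 < Q ^ n) by (apply pow_lt; lra).
  replace (C * (v - u) / Q ^ n) with (C / Q ^ n * (v - u)) by (field; lra).
  lra.
Qed.

(* The ends of [[a, a + 1/Q]] have the same image, so [F (a + 1/Q) - F a = psi a - psi (a + 1/Q)];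
   expanding the right side through [branch], at a block boundary the preimages are again
   the two ends, where the second hypothesis applies. *)
Lemma endpoint_defect (M : R) :
  (forall x1 x2, a <= x1 -> x1 <= x2 -> x2 <= a + 1 / Q -> F x1 - F x2 <= M) ->
  (forall x, a <= x <= a + 1 / (Q * Q) -> F a <= F x) ->
  F (a + 1 / Q) - F a <= M + K / (Q * Q * (Q - 1)).
Proof.
  intros HM Hleft.
  pose (b := a + 1 / Q). assert (Hb : a + 1 / Q = b) by reflexivity. clearbody b. rewrite Hb.
  assert (Hba : (b - a) / Q = 1 / (Q * Q)) by (rewrite <- Hb; field; lra).
  assert (Hab : a <= b) by (assert (0 < 1 / Q) by (apply Rdiv_lt_0_compat; lra); lra).
  assert (Hdefect : K / (Q * Q * (Q - 1)) = K / (Q - 1) * ((b - a) / Q))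
    by (rewrite Hba; field; lra).
  assert (Hends : F b - F a = psi a - psi b).
  { pose proof (cohomology a ltac:(lra)) as Ea. pose proof (cohomology b ltac:(lra)) as Eb.
    replace (Q * b) with (Q * a + 1) in Eb by (rewrite <- Hb; field; lra).
    rewrite psi_periodic in Eb. lra. }
  rewrite Hends, Hdefect.
  destruct (unit_block_split (Q * a) a b Hab ltac:(lra)) as [m [Ha [Hbm | Hbm]]].
  - destruct (branch_spec m a ltac:(lra)) as [Ba _].
    destruct (branch_spec m b ltac:(lra)) as [Bb _].
    pose proof (HM _ _ (proj1 Ba) (branch_le m a b Hab) (proj2 Bb)).
    pose proof (block_estimate _ m a b psi_one_sided ltac:(lra) Hab Hbm).
    lra.
  - remember (Q * a + IZR m + 1) as p eqn:Hp.
    assert (Hp1 : p = Q * a + IZR (m + 1)) by (rewrite plus_IZR; lra).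
    assert (Hbr_p : branch m p = b) by (unfold branch; rewrite Hp, <- Hb; field; lra).
    assert (Hbr_p1 : branch (m + 1) p = a) by (unfold branch; rewrite Hp1; field; lra).
    destruct (branch_spec m a ltac:(lra)) as [Ba _].
    destruct (branch_spec (m + 1) b ltac:(lra)) as [Bb _].
    pose proof (HM (branch m a) b (proj1 Ba) ltac:(rewrite <- Hbr_p; apply branch_le; lra) ltac:(lra)).
    assert (branch (m + 1) b - a <= (b - a) / Q).
    { rewrite <- Hbr_p1 at 1. rewrite branch_sub.
      apply Rmult_le_compat_r; [left; apply Rinv_0_lt_compat |]; lra. }
    pose proof (Hleft (branch (m + 1) b) ltac:(lra)).
    pose proof (block_estimate _ m a p psi_one_sided ltac:(lra) ltac:(lra) ltac:(lra)).
    pose proof (block_estimate _ (m + 1) p b psi_one_sided ltac:(lra) ltac:(lra) ltac:(lra)).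
    rewrite Hbr_p, Hbr_p1 in *.
    replace ((b - a) / Q) with ((p - a) / Q + (b - p) / Q) by (field; lra).
    lra.
Qed.
End Transfer.

Section Window.
Variables (q : nat) (c lam : R).
Hypothesis q_ge_3 : (3 <= q)%nat.
Hypothesis theta_pos : 0 < lam + 1 / INR q + c.
Hypothesis theta_small : lam + 1 / INR q + c <= 3 / (8 * INR q).

Let Q_ge_3 : 3 <= INR q.
Proof. apply (le_INR 3) in q_ge_3. simpl in q_ge_3. lra. Qed.

Let q_ge_1 : (1 <= q)%nat.
Proof. lia. Qed.

Let theta_lt : 3 / (8 * INR q) < 1 / INR q.
Proof. apply Rmult_lt_reg_r with (8 * INR q); [lra |]. field_simplify; lra. Qed.

Let f_c_window x : lam <= x <= lam + 1 / INR q ->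
  f_c q c x = profile q (Rabs (x + c)) /\ Rabs (x + c) < 1 / INR q.
Proof.
  intros Hx. assert (Habs : Rabs (x + c) < 1 / INR q) by (apply Rabs_def1; lra).
  split; [apply f_c_profile |]; assumption.
Qed.

Let profile_abs_le y1 y2 : Rabs y2 <= Rabs y1 -> Rabs y1 < 1 / INR q ->
  profile q (Rabs y1) <= profile q (Rabs y2).
Proof. intros. apply profile_antitone; [exact q_ge_1 | apply Rabs_pos | assumption ..]. Qed.

Lemma f_c_window_left : f_c q c lam = profile q (1 / INR q - (lam + 1 / INR q + c)).
Proof.
  destruct (f_c_window lam ltac:(lra)) as [-> _]. f_equal.
  rewrite Rabs_left; lra.
Qed.

Lemma f_c_window_right : f_c q c (lam + 1 / INR q) = profile q (lam + 1 / INR q + c).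
Proof.
  destruct (f_c_window (lam + 1 / INR q) ltac:(lra)) as [-> _]. f_equal.
  rewrite Rabs_pos_eq; lra.
Qed.

Lemma f_c_window_one_sided :
  one_sided_lipschitz lam (lam + 1 / INR q) (profile_lip q (3 / (8 * INR q))) (f_c q c).
Proof.
  intros x1 x2 H1 H12 H2.
  destruct (f_c_window x1 ltac:(lra)) as [-> B1].
  destruct (f_c_window x2 ltac:(lra)) as [-> B2].
  assert (0 <= profile_lip q (3 / (8 * INR q)) * (x2 - x1))
    by (apply Rmult_le_pos; [apply profile_lip_nonneg; [exact q_ge_1 | lra | lra] | lra]).
  destruct (Rle_dec (Rabs (x2 + c)) (Rabs (x1 + c))) as [Habs | Habs].
  - pose proof (profile_abs_le _ _ Habs B1). lra.
  - apply Rnot_le_lt in Habs.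
    assert (Hy2 : 0 < x2 + c).
    { destruct (Rle_dec (x2 + c) 0); [| lra].
      rewrite (Rabs_left1 (x2 + c)), (Rabs_left1 (x1 + c)) in Habs; lra. }
    rewrite (Rabs_pos_eq (x2 + c)) in * by lra.
    pose proof (Rle_abs (x1 + c)).
    eapply Rle_trans;
      [apply (profile_sub_le q q_ge_1 (3 / (8 * INR q))); [apply Rabs_pos | lra ..] |].
    apply Rmult_le_compat_l; [apply profile_lip_nonneg; [exact q_ge_1 | ..] |]; lra.
Qed.

(* [f_c <= ln q], and [f_c x2 >= f_c (lam + 1/q)] unless [x2 + c < - theta], in which case
   [f_c x1 <= f_c x2]. *)
Lemma f_c_window_drop x1 x2 : lam <= x1 -> x1 <= x2 -> x2 <= lam + 1 / INR q ->
  f_c q c x1 - f_c q c x2 <= ln (INR q) - f_c q c (lam + 1 / INR q).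
Proof.
  intros H1 H12 H2. rewrite f_c_window_right, <- profile_0 by exact q_ge_1.
  destruct (f_c_window x1 ltac:(lra)) as [-> B1].
  destruct (f_c_window x2 ltac:(lra)) as [-> B2].
  pose proof (profile_antitone q q_ge_1 0 (Rabs (x1 + c)) (Rle_refl 0) (Rabs_pos _) B1).
  pose proof (profile_antitone q q_ge_1 0 (lam + 1 / INR q + c) (Rle_refl 0) ltac:(lra) ltac:(lra)).
  destruct (Rle_dec (Rabs (x2 + c)) (lam + 1 / INR q + c)) as [Habs | Habs].
  - pose proof (profile_antitone q q_ge_1 _ _ (Rabs_pos _) Habs ltac:(lra)). lra.
  - assert (x2 + c < 0) by (destruct (Rle_dec 0 (x2 + c)); [rewrite Rabs_pos_eq in Habs |]; lra).
    pose proof (profile_abs_le (x1 + c) (x2 + c) ltac:(rewrite !Rabs_left; lra) B1). lra.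
Qed.

Lemma f_c_window_left_min x : lam <= x <= lam + 1 / (INR q * INR q) -> f_c q c lam <= f_c q c x.
Proof.
  intros Hx.
  assert (1 / (INR q * INR q) <= 1 / INR q - 3 / (8 * INR q)).
  { apply Rmult_le_reg_r with (8 * INR q * INR q); [nra |]. field_simplify; nra. }
  destruct (f_c_window lam ltac:(lra)) as [-> B0].
  destruct (f_c_window x ltac:(lra)) as [-> _].
  apply profile_abs_le; [rewrite !Rabs_left1 |]; lra.
Qed.
End Window.

Lemma pre_sturmian_cohomology q c lam : pre_sturmian q c lam ->
  exists psi beta, one_periodic psi /\ lipschitz psi /\
    forall x, lam <= x <= lam + 1 / INR q -> f_c q c x + psi x - psi (INR q * x) = beta.
Proof.
  intros [_ (psi & beta & Hper & Hlip & Heq)].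
  exists psi, beta. split; [exact Hper | split; [exact Hlip |]].
  intros x Hx.
  assert (Hin : in_C q lam x) by (exists 0%Z; rewrite Rplus_0_r; exact Hx).
  pose proof (Heq x Hin) as E. unfold Tq, frac_part in E.
  replace (INR q * x - IZR (Int_part (INR q * x))) with (INR q * x + IZR (- Int_part (INR q * x)))
    in E by (rewrite opp_IZR; ring).
  rewrite (one_periodic_IZR psi Hper) in E. exact E.
Qed.

Lemma pre_sturmian_lower_bound q c lam : (3 <= q)%nat -> - (1 / INR q) - c < lam < - c ->
  pre_sturmian q c lam -> 3 / (8 * INR q) < lam + 1 / INR q + c.
Proof.
  intros Hq Hlam Hs.
  assert (HQ : 3 <= INR q) by (apply (le_INR 3) in Hq; simpl in Hq; lra).
  destruct (Rlt_or_le (3 / (8 * INR q)) (lam + 1 / INR q + c)) as [| Htheta]; [assumption | exfalso].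
  destruct (pre_sturmian_cohomology q c lam Hs) as (psi & beta & Hper & Hlip & Hcoh).
  pose proof (endpoint_defect (INR q) lam _ beta (f_c q c) psi ltac:(lra) Hper Hlip Hcoh
    (f_c_window_one_sided q c lam Hq ltac:(lra) Htheta) _
    (f_c_window_drop q c lam Hq ltac:(lra) Htheta)
    (f_c_window_left_min q c lam Hq ltac:(lra) Htheta)) as Hdefect.
  rewrite (f_c_window_left q c lam), (f_c_window_right q c lam) in Hdefect
    by first [exact Hq | lra].
  pose proof (profile_gap q Hq).
  assert (3 / (8 * INR q) + 5 / (8 * INR q) = 1 / INR q) by (field; lra).
  pose proof (profile_antitone q ltac:(lia) (lam + 1 / INR q + c) (3 / (8 * INR q))
    ltac:(lra) Htheta ltac:(lra)).
  pose proof (profile_antitone q ltac:(lia) (5 / (8 * INR q)) (1 / INR q - (lam + 1 / INR q + c))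
    ltac:(lra) ltac:(lra) ltac:(lra)).
  lra.
Qed.

(** * Symmetry *)

Lemma f_c_opp q c x : f_c q (- c) x = f_c q c (- x).
Proof.
  unfold f_c.
  replace (- x + c) with (- (x + - c)) by ring.
  replace (PI * - (x + - c)) with (- (PI * (x + - c))) by ring.
  replace (PI * INR q * - (x + - c)) with (- (PI * INR q * (x + - c))) by ring.
  rewrite !sin_neg.
  destruct (Req_EM_T (sin (PI * (x + - c))) 0) as [E | E];
    destruct (Req_EM_T (- sin (PI * (x + - c))) 0) as [E' | E']; try lra.
  f_equal. f_equal. field. exact E.
Qed.

Lemma Tq_opp q x : exists k : Z, Tq q (- x) = - Tq q x + IZR k.
Proof.
  unfold Tq, frac_part. exists (- (Int_part (INR q * x) + Int_part (INR q * - x)))%Z.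
  rewrite opp_IZR, plus_IZR. replace (INR q * - x) with (- (INR q * x)) by ring. ring.
Qed.

Lemma pre_sturmian_reflect q c lam :
  pre_sturmian q c lam -> pre_sturmian q (- c) (- lam - 1 / INR q).
Proof.
  intros [[Lf HLf] (psi & beta & Hper & [L HL] & Heq)].
  assert (HC : forall x, in_C q (- lam - 1 / INR q) x -> in_C q lam (- x)).
  { intros x [k Hk]. exists (- k)%Z. rewrite opp_IZR. lra. }
  split.
  - exists Lf. intros x y Hx Hy. rewrite !f_c_opp.
    replace (x - y) with (- (- x - - y)) by ring. rewrite Rabs_Ropp.
    apply HLf; auto.
  - exists (fun x => psi (- x)), beta. split; [| split].
    + intros x. replace (- (x + 1)) with (- x + IZR (-1)) by (simpl; ring).
      apply (one_periodic_IZR psi Hper).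
    + exists L. intros x y. replace (x - y) with (- (- x - - y)) by ring.
      rewrite Rabs_Ropp. apply HL.
    + intros x Hx. rewrite f_c_opp, <- (Heq (- x) (HC x Hx)).
      destruct (Tq_opp q x) as [k ->]. rewrite (one_periodic_IZR psi Hper). reflexivity.
Qed.

Theorem lemma5p7 (q : nat) (c lam : R) :
  (3 <= q)%nat ->
  - (1 / INR q) - c < lam < - c ->
  pre_sturmian q c lam ->
  3 / (8 * INR q) < lam + 1 / INR q + c < 5 / (8 * INR q).
Proof.
  intros Hq Hlam Hs.
  assert (HQ : 3 <= INR q) by (apply (le_INR 3) in Hq; simpl in Hq; lra).
  split; [exact (pre_sturmian_lower_bound q c lam Hq Hlam Hs) |].
  pose proof (pre_sturmian_lower_bound q (- c) (- lam - 1 / INR q) Hq ltac:(lra)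
    (pre_sturmian_reflect q c lam Hs)).
  assert (5 / (8 * INR q) = 1 / INR q - 3 / (8 * INR q)) by (field; lra).
  lra.
Qed.
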